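(* Let $V$ be a real vector space. Every maximal chain of vector subspaces of $V$ contains a unique basic subchain, and conversely every basic chain of vector subspaces of $V$ is contained in a unique maximal chain.
   Context: A chain of vector subspaces of $V$ is a set $F=\{F_a\}_{a\in A}$ of subspaces such that for $a\ne b$ one has a proper inclusion $F_a\subsetneq F_b$ or $F_b\subsetneq F_a$. A chain is maximal if it is not properly contained in another chain. A chain $F$ is basic if it is minimal (with respect to inclusion of chains) among chains with the following property: for every $x\in V$ there exist $F_a\subset F_b$ in $F$ with $\dim F_b/F_a=1$ and $x\in F_b\setminus F_a$. *)

From HB Require Import structures.
From mathcomp Require Import all_boot all_order all_algebra.
From mathcomp Require Import boolp classical_sets reals.
Set Implicit Arguments. Unset Strict Implicit. Unset Printing Implicit Defensive.
Import GRing.Theory.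
Local Open Scope ring_scope.
Local Open Scope classical_set_scope.

Section Chains.
Variables (R : realType) (V : lmodType R).

Definition subspace (U : set V) : Prop :=
  U 0 /\ (forall x y, U x -> U y -> U (x + y)) /\
  (forall (a : R) x, U x -> U (a *: x)).

Definition chain (F : set (set V)) : Prop :=
  (forall U, F U -> subspace U) /\
  (forall U W, F U -> F W -> U <> W -> U `<` W \/ W `<` U).

Definition maximal_chain (F : set (set V)) : Prop :=
  chain F /\ (forall G, chain G -> F `<=` G -> G = F).

(* A ⊆ B and dim (B / A) = 1, written out: the quotient B/A is spanned by
   the class of some v in B \ A *)
Definition codim1 (A B : set V) : Prop :=
  A `<=` B /\ exists v, B v /\ ~ A v /\
    (forall y, B y -> exists a (c : R), A a /\ y = a + c *: v).

Definition separating (F : set (set V)) : Prop :=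
  forall x : V, x <> 0 -> exists A B, F A /\ F B /\ A `<=` B /\
    codim1 A B /\ B x /\ ~ A x.

Definition basic_chain (F : set (set V)) : Prop :=
  chain F /\ separating F /\
  (forall G, chain G -> separating G -> G `<=` F -> G = F).

End Chains.

From HB Require Import structures.
From mathcomp Require Import all_boot all_order all_algebra.
From mathcomp Require Import boolp classical_sets reals.
Set Implicit Arguments. Unset Strict Implicit. Unset Printing Implicit Defensive.
Import GRing.Theory.
Local Open Scope ring_scope.
Local Open Scope classical_set_scope.

(* For a chain F and x <> 0 let F-(x) be the union of the members of F
   missing x and F+(x) the intersection of those containing x.  If A <= B
   are members of F with dim B/A = 1 and x in B \ A, then B = A + Rx, which
   forces A = F-(x) and B = F+(x); hence every separating subchain of F
   contains all these jumps.  In a maximal chain F-(x) and F+(x) are members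
   and dim F+(x)/F-(x) = 1, so the jumps form the unique basic subchain.
   Conversely a basic chain G lies in a maximal chain by Zorn's lemma, and if
   F1, F2 are maximal chains containing G, the jumps of F1 lie in G, hence in
   F2, so F1 and F2 have the same F-(x); a vector x in U \ W with U in F1,
   W in F2 then gives W <= F-(x) <= U, so F1 U F2 is a chain and F1 = F2. *)

Section Chains.
Variables (R : realType) (V : lmodType R).
Implicit Types (U W A B : set V) (F G H : set (set V)) (x y : V).

Lemma subspace0 U : subspace U -> U 0.
Proof. by case. Qed.

Lemma subspaceD U x y : subspace U -> U x -> U y -> U (x + y).
Proof. by case=> _ [+ _]; apply. Qed.

Lemma subspaceZ U (a : R) x : subspace U -> U x -> U (a *: x).
Proof. by case=> _ [_]; apply. Qed.

Lemma subspaceB U x y : subspace U -> U x -> U y -> U (x - y).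
Proof. by move=> sU Ux Uy; rewrite -scaleN1r; apply: subspaceD (subspaceZ _ _ _). Qed.

Definition add_line A x : set V := [set y | exists a (c : R), A a /\ y = a + c *: x].

Lemma add_line_subspace A x : subspace A -> subspace (add_line A x).
Proof.
move=> sA; split; first by exists 0, 0; rewrite scale0r addr0; split=> //; apply: subspace0.
split=> [_ _ [a [c [Aa ->]]] [b [d [Ab ->]]]|k _ [a [c [Aa ->]]]].
  exists (a + b), (c + d); split; first exact: subspaceD.
  by rewrite scalerDl addrACA.
exists (k *: a), (k * c); split; first exact: subspaceZ.
by rewrite scalerDr scalerA.
Qed.

Lemma add_line_l A x : A `<=` add_line A x.
Proof. by move=> a Aa; exists a, 0; rewrite scale0r addr0. Qed.

Lemma add_line_r A x : subspace A -> add_line A x x.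
Proof. by move=> sA; exists 0, 1; rewrite scale1r add0r; split=> //; apply: subspace0. Qed.

Lemma add_line_sub A x U : subspace U -> A `<=` U -> U x -> add_line A x `<=` U.
Proof. by move=> sU AU Ux _ [a [c [Aa ->]]]; apply: subspaceD (AU _ Aa) (subspaceZ _ _ _). Qed.

Lemma codim1_add_line A B x : subspace A -> codim1 A B -> B x -> ~ A x ->
  B `<=` add_line A x.
Proof.
move=> sA [_ [v [_ [_ Bv]]]] Bx Ax _ /Bv[a [c [Aa ->]]].
have [a0 [c0 [Aa0 ex]]] := Bv x Bx.
have c0_neq0 : c0 != 0 by apply: contra_notN Ax => /eqP c00; rewrite ex c00 scale0r addr0.
exists (a - (c / c0) *: a0), (c / c0); split; first by apply: subspaceB => //; apply: subspaceZ.
by rewrite ex scalerDr scalerA mulfVK // addrA subrK.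
Qed.

Lemma chainP F :
  chain F <-> (forall U, F U -> subspace U) /\ total_on F subset.
Proof.
split=> [[sF ltF]|[sF leF]].
  split=> // U W FU FW; have [->|UW] := pselect (U = W); first by left.
  by case: (ltF U W FU FW UW) => -[]; [left|right].
split=> // U W FU FW UW; case: (leF U W FU FW) => UsubW; [left|right]; split=> //.
  by move=> WU; apply: UW; apply/seteqP.
by move=> UW'; apply: UW; apply/seteqP.
Qed.

Lemma chain_subspace F U : chain F -> F U -> subspace U.
Proof. by case=> + _; apply. Qed.

Lemma chain_total F U W : chain F -> F U -> F W -> U `<=` W \/ W `<=` U.
Proof. by move=> /chainP[_]; apply. Qed.

Lemma sub_chain F G : chain F -> G `<=` F -> chain G.
Proof.
move=> /chainP[sF leF] GF; apply/chainP; split=> [U /GF/sF //|U W GU GW].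
exact: leF (GF _ GU) (GF _ GW).
Qed.

Lemma chain_from_pairs F :
  (forall U W, F U -> F W -> exists2 H, chain H & H U /\ H W) -> chain F.
Proof.
move=> pairF; apply/chainP; split=> [U FU|U W FU FW].
  by have [H cH [HU _]] := pairF U U FU FU; apply: chain_subspace HU.
by have [H cH [HU HW]] := pairF U W FU FW; apply: chain_total HU HW.
Qed.

Lemma chainU F1 F2 : chain F1 -> chain F2 ->
  (forall U W, F1 U -> F2 W -> U `<=` W \/ W `<=` U) -> chain (F1 `|` F2).
Proof.
move=> cF1 cF2 le12; apply/chainP; split=> [U [/(chain_subspace cF1)|/(chain_subspace cF2)] //|].
move=> U W [F1U|F2U] [F1W|F2W]; first exact: chain_total cF1 F1U F1W.
- exact: le12.
- by case: (le12 _ _ F1W F2U); [right|left].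
- exact: chain_total cF2 F2U F2W.
Qed.

Lemma maximal_chain_mem F W : maximal_chain F -> subspace W ->
  (forall U, F U -> U `<=` W \/ W `<=` U) -> F W.
Proof.
move=> [cF maxF] sW leW.
have cW : chain [set W] by apply/chainP; split=> [_ -> //|_ _ -> ->]; left.
suff <- : F `|` [set W] = F by right.
apply: maxF; last exact: subsetUl.
by apply: chainU => // U _ FU ->; apply: leW.
Qed.

Lemma chain_sub_maximal G : chain G -> exists2 F, maximal_chain F & G `<=` F.
Proof.
move=> cG.
have chain_bigcup (Fs : set (set (set V))) : Fs `<=` [set H | chain (H `|` G)] ->
    total_on Fs subset -> chain (\bigcup_(H in Fs) H `|` G).
  move=> FsG Fs_total; apply: chain_from_pairs => U W.
  move=> [[H1 FsH1 H1U]|GU] [[H2 FsH2 H2W]|GW]; last by exists G.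
  - case: (Fs_total H1 H2 FsH1 FsH2) => [H12|H21].
      by exists (H2 `|` G); [exact: FsG|split; left; [exact: H12|]].
    by exists (H1 `|` G); [exact: FsG|split; left; [|exact: H21]].
  - by exists (H1 `|` G); [exact: FsG|split; [left|right]].
  - by exists (H2 `|` G); [exact: FsG|split; [right|left]].
(* The predicate is "H `|` G is a chain" rather than "H is a chain
   containing G" because Zorn_bigcup also requires it of the empty union. *)
have [A [cAG maxA]] := Zorn_bigcup chain_bigcup.
exists (A `|` G) => //; split=> // H cH AGH.
have GH : G `<=` H := subset_trans (@subsetUr _ A G) AGH.
apply/seteqP; split=> //; apply: contrapT => HAG; apply: (maxA H).
  split; first exact: subset_trans (@subsetUl _ A G) AGH.
  by move=> HA; apply: HAG => U /HA; left.
by rewrite /= setUidl.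
Qed.

(* 0 is added so that lower_jump is a subspace even when no member misses x. *)
Definition lower_jump F x : set V :=
  [set 0] `|` \bigcup_(U in [set U | F U /\ ~ U x]) U.

Definition upper_jump F x : set V := \bigcap_(U in [set U | F U /\ U x]) U.

Definition jumps F : set (set V) :=
  [set U | exists2 x, x <> 0 & U = lower_jump F x \/ U = upper_jump F x].

Section Jumps.
Variables (F : set (set V)) (cF : chain F).

Lemma sub_lower_jump W x : F W -> ~ W x -> W `<=` lower_jump F x.
Proof. by move=> FW Wx y Wy; right; exists W. Qed.

Lemma lower_jump_sub W x : F W -> W x -> lower_jump F x `<=` W.
Proof.
move=> FW Wx y [->|[U [FU Ux] Uy]]; first exact: subspace0 (chain_subspace cF FW).
by case: (chain_total cF FU FW) => [/(_ _ Uy)//|WU]; case: Ux; apply: WU.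
Qed.

Lemma sub_upper_jump W x : F W -> ~ W x -> W `<=` upper_jump F x.
Proof.
move=> FW Wx y Wy U [FU Ux].
by case: (chain_total cF FW FU) => [/(_ _ Wy)//|UW]; case: Wx; apply: UW.
Qed.

Lemma upper_jump_sub W x : F W -> W x -> upper_jump F x `<=` W.
Proof. by move=> FW Wx y; apply. Qed.

Lemma upper_jump_x x : upper_jump F x x.
Proof. by move=> U []. Qed.

Lemma lower_jump_x x : x <> 0 -> ~ lower_jump F x x.
Proof. by move=> x0 [//|[U [_ Ux]]]. Qed.

Lemma lower_upper_jump x : lower_jump F x `<=` upper_jump F x.
Proof. by move=> y Ly U [FU Ux]; apply: lower_jump_sub Ly. Qed.

Lemma lower_jump_subspace x : subspace (lower_jump F x).
Proof.
have sF := chain_subspace cF.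
split; first by left.
split=> [y z [->|[U [FU Ux] Uy]] [->|[W [FW Wx] Wz]]|a y [->|[U [FU Ux] Uy]]].
- by left; rewrite addr0.
- by right; exists W; rewrite ?add0r.
- by right; exists U; rewrite ?addr0.
- case: (chain_total cF FU FW) => [UW|WU]; right.
    by exists W => //; apply: subspaceD (sF _ FW) (UW _ Uy) Wz.
  by exists U => //; apply: subspaceD (sF _ FU) Uy (WU _ Wz).
- by left; rewrite scaler0.
- by right; exists U => //; apply: subspaceZ (sF _ FU) Uy.
Qed.

Lemma upper_jump_subspace x : subspace (upper_jump F x).
Proof.
have sF := chain_subspace cF.
split; first by move=> U [FU _]; apply: subspace0 (sF _ FU).
split=> [y z Uy Uz U FUx|a y Uy U FUx]; have sU := sF _ FUx.1.
  by apply: subspaceD sU (Uy _ FUx) (Uz _ FUx).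
by apply: subspaceZ sU (Uy _ FUx).
Qed.

Lemma codim1_jumpE A B x : F A -> F B -> codim1 A B -> B x -> ~ A x ->
  A = lower_jump F x /\ B = upper_jump F x.
Proof.
move=> FA FB AB Bx Ax.
have sA := chain_subspace cF FA.
have x_neq0 : x <> 0 by move=> x0; apply: Ax; rewrite x0; apply: subspace0.
have B_line := codim1_add_line sA AB Bx Ax.
have AL := sub_lower_jump FA Ax.
split; apply/seteqP; split=> //; last exact: upper_jump_sub.
- move=> y Ly; have [a [c [Aa ey]]] := B_line y (lower_jump_sub FB Bx Ly).
  have [c0|c_neq0] := eqVneq c 0; first by rewrite ey c0 scale0r addr0.
  have sL := lower_jump_subspace x.
  have ex : x = c^-1 *: (y - a).
    by rewrite ey addrAC subrr add0r scalerA mulVf // scale1r.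
  exfalso; apply: (lower_jump_x x_neq0); rewrite {2}ex.
  by apply: (subspaceZ _ sL); apply: (subspaceB sL Ly); apply: AL.
- apply: subset_trans B_line _.
  exact: add_line_sub (upper_jump_subspace x) (sub_upper_jump FA Ax) (upper_jump_x (x := x)).
Qed.

Lemma jumps_least G : G `<=` F -> separating G -> jumps F `<=` G.
Proof.
move=> GF sepG U [x x0 eU].
have [A [B [GA [GB [_ [AB [Bx Ax]]]]]]] := sepG x x0.
have [eA eB] := codim1_jumpE (GF _ GA) (GF _ GB) AB Bx Ax.
by case: eU => ->; rewrite -?eA -?eB.
Qed.

End Jumps.

Section MaximalChain.
Variables (F : set (set V)) (mF : maximal_chain F).
Let cF : chain F := mF.1.

Lemma lower_jump_mem x : F (lower_jump F x).
Proof.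
apply: maximal_chain_mem mF (lower_jump_subspace cF x) _ => U FU.
by have [Ux|Ux] := pselect (U x); [right; apply: lower_jump_sub|left; apply: sub_lower_jump].
Qed.

Lemma upper_jump_mem x : F (upper_jump F x).
Proof.
apply: maximal_chain_mem mF (upper_jump_subspace cF x) _ => U FU.
by have [Ux|Ux] := pselect (U x); [right; apply: upper_jump_sub|left; apply: sub_upper_jump].
Qed.

Lemma codim1_jump x : x <> 0 -> codim1 (lower_jump F x) (upper_jump F x).
Proof.
move=> x0; split; first exact: lower_upper_jump.
exists x; split; first exact: upper_jump_x.
split; first exact: lower_jump_x.
have sL := lower_jump_subspace cF x.
have F_line : F (add_line (lower_jump F x) x).
  apply: maximal_chain_mem mF (add_line_subspace x sL) _ => U FU.
  have [Ux|Ux] := pselect (U x).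
    by right; apply: add_line_sub (chain_subspace cF FU) (lower_jump_sub cF FU Ux) Ux.
  by left; apply: subset_trans (sub_lower_jump FU Ux) (@add_line_l _ _).
by move=> y /(upper_jump_sub F_line (add_line_r x sL)).
Qed.

Lemma jumps_sub : jumps F `<=` F.
Proof. by move=> _ [x _ [->|->]]; [apply: lower_jump_mem|apply: upper_jump_mem]. Qed.

Lemma jumps_separating : separating (jumps F).
Proof.
move=> x x0; exists (lower_jump F x), (upper_jump F x).
do 2![split; first by exists x; [|by [left|right]]].
split; first exact: lower_upper_jump.
split; first exact: codim1_jump.
by split; [apply: upper_jump_x|apply: lower_jump_x].
Qed.

Lemma basic_jumps : basic_chain (jumps F).
Proof.
split; first exact: sub_chain cF jumps_sub.
split=> [|G cG sepG GJ]; first exact: jumps_separating.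
apply/seteqP; split=> //; apply: (jumps_least cF) => //.
exact: subset_trans GJ jumps_sub.
Qed.

Lemma basic_subchainE G : G `<=` F -> basic_chain G -> G = jumps F.
Proof.
move=> GF [cG [sepG minG]]; apply/esym/minG; last exact: jumps_least.
  exact: sub_chain cF jumps_sub.
exact: jumps_separating.
Qed.

End MaximalChain.

Lemma lower_jump_eq F1 F2 x : maximal_chain F1 -> chain F2 ->
  jumps F1 `<=` F2 -> x <> 0 -> lower_jump F2 x = lower_jump F1 x.
Proof.
move=> mF1 cF2 JF2 x0.
have F2L : F2 (lower_jump F1 x) by apply: JF2; exists x => //; left.
have F2U : F2 (upper_jump F1 x) by apply: JF2; exists x => //; right.
by have [<- _] := codim1_jumpE cF2 F2L F2U (codim1_jump mF1 x0)
  (upper_jump_x (x := x)) (lower_jump_x x0).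
Qed.

Lemma maximal_chains_eq F1 F2 G : maximal_chain F1 -> maximal_chain F2 ->
  separating G -> G `<=` F1 -> G `<=` F2 -> F1 = F2.
Proof.
move=> mF1 mF2 sepG GF1 GF2.
have JF2 : jumps F1 `<=` F2 := subset_trans (jumps_least mF1.1 GF1 sepG) GF2.
have le12 U W : F1 U -> F2 W -> U `<=` W \/ W `<=` U.
  move=> F1U F2W; apply: contrapT => /not_orP[/nonsubset[x [Ux Wx]] /nonsubset[y [Wy Uy]]].
  have x0 : x <> 0 by move=> x0; apply: Wx; rewrite x0; apply: subspace0 (chain_subspace mF2.1 F2W).
  apply: Uy; apply: (lower_jump_sub mF1.1 F1U Ux).
  by rewrite -(lower_jump_eq mF1 mF2.1 JF2 x0); apply: (sub_lower_jump F2W Wx).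
have F12 : F1 `|` F2 = F1 := mF1.2 _ (chainU mF1.1 mF2.1 le12) (@subsetUl _ _ _).
by apply: mF2.2 mF1.1 _; rewrite -F12; apply: subsetUr.
Qed.

End Chains.

Theorem lemma4 (R : realType) (V : lmodType R) :
  (forall F : set (set V), maximal_chain F ->
     exists! G : set (set V), G `<=` F /\ basic_chain G) /\
  (forall G : set (set V), basic_chain G ->
     exists! F : set (set V), maximal_chain F /\ G `<=` F).
Proof.
split=> [F mF|G [cG [sepG _]]].
  exists (jumps F); split; first by split; [apply: jumps_sub|apply: basic_jumps].
  by move=> G [GF bG]; rewrite (basic_subchainE mF GF bG).
have [F mF GF] := chain_sub_maximal cG.
by exists F; split=> // F' [mF' GF']; apply: maximal_chains_eq mF mF' sepG GF GF'.
Qed.
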